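(* Let $G$ be a scheduling game on $m\ge2$ identical machines of common speed $s>0$ with arbitrary priority lists, in which every job $i$ has negative deterioration $p_i(t)=\max\{\tau_i,b_i-a_it\}$ with $0\le a_i\le s$ (all jobs delay-averse). Then every pure Nash equilibrium $\sigma$ of $G$ satisfies $C_{\max}(\sigma)\le\left(3-\frac1m\right)OPT(G)$; i.e., $PoA({\cal G}^{-DA}_P)\le 3-\frac1m$.
   Context: Scheduling game: a finite set $N$ of $n$ jobs (players) and a set $M$ of $m$ machines. Machine $j$ has speed $s_j>0$ and a priority list $\pi_j$, a bijection $N\to\{1,\dots,n\}$; job $u$ has higher priority than $v$ on $j$ iff $\pi_j(u)<\pi_j(v)$. Negative deterioration: $p_i(t)=\max\{\tau_i,b_i-a_it\}$ with $b_i,a_i\ge0$, $\tau_i>0$. A profile $\sigma\in M^N$ assigns each job to a machine. On machine $j$, the jobs assigned to it, listed in increasing $\pi_j$-order as $i_1,i_2,\dots$, are processed without idle time: $S_{i_1}(\sigma)=0$, $C_{i_k}(\sigma)=S_{i_k}(\sigma)+p_{i_k}(S_{i_k}(\sigma))/s_j$, $S_{i_{k+1}}(\sigma)=C_{i_k}(\sigma)$. The cost of job $i$ is $C_i(\sigma)$. A pure Nash equilibrium (NE) is a profile in which no job can strictly decrease its completion time by unilaterally changing its machine. Makespan $C_{\max}(\sigma)=\max_iC_i(\sigma)$; $OPT(G)=\min_\sigma C_{\max}(\sigma)$ over all profiles. ${\cal G}^{-DA}_P$ denotes the class of all games described in the claim, and its PoA is the supremum over its games of $\max_{\sigma\text{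 NE}}C_{\max}(\sigma)/OPT(G)$. *)

From HB Require Import structures.
From mathcomp Require Import all_boot all_order all_algebra perm.
Set Implicit Arguments. Unset Strict Implicit. Unset Printing Implicit Defensive.
Import Order.TTheory GRing.Theory Num.Theory.
Local Open Scope ring_scope.

(* Machine j has priority list pi j : {perm 'I_n}; job u has higher priority
   than v on j iff pi j u < pi j v. *)

Definition ptime (R : realFieldType) (tau b a t : R) : R := Num.max tau (b - a * t).

Definition jobs_on (n m : nat) (pi : 'I_m -> {perm 'I_n}) (sigma : 'I_n -> 'I_m)
  (j : 'I_m) : seq 'I_n :=
  sort (fun u v => (pi j u <= pi j v)%N) [seq i <- enum 'I_n | sigma i == j].

Definition step (R : realFieldType) (n : nat) (s : R) (tau b a : 'I_n -> R)
  (t : R) (k : 'I_n) : R := t + ptime (tau k) (b k) (a k) t / s.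

Definition start_time (R : realFieldType) (n m : nat) (s : R) (tau b a : 'I_n -> R)
  (pi : 'I_m -> {perm 'I_n}) (sigma : 'I_n -> 'I_m) (i : 'I_n) : R :=
  let l := jobs_on pi sigma (sigma i) in
  foldl (step s tau b a) 0 (take (index i l) l).

Definition compl_time (R : realFieldType) (n m : nat) (s : R) (tau b a : 'I_n -> R)
  (pi : 'I_m -> {perm 'I_n}) (sigma : 'I_n -> 'I_m) (i : 'I_n) : R :=
  step s tau b a (start_time s tau b a pi sigma i) i.

Definition makespan (R : realFieldType) (n m : nat) (s : R) (tau b a : 'I_n -> R)
  (pi : 'I_m -> {perm 'I_n}) (sigma : 'I_n -> 'I_m) : R :=
  \big[Num.max/0]_(i < n) compl_time s tau b a pi sigma i.

Definition deviate (n m : nat) (sigma : 'I_n -> 'I_m) (i : 'I_n) (j : 'I_m) : 'I_n -> 'I_m :=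
  fun k => if k == i then j else sigma k.

Definition is_NE (R : realFieldType) (n m : nat) (s : R) (tau b a : 'I_n -> R)
  (pi : 'I_m -> {perm 'I_n}) (sigma : 'I_n -> 'I_m) : Prop :=
  forall (i : 'I_n) (j : 'I_m),
    compl_time s tau b a pi sigma i <= compl_time s tau b a pi (deviate sigma i j) i.

From mathcomp Require Import all_boot all_order all_algebra perm.
From mathcomp Require Import ring lra.
Import Order.TTheory GRing.Theory Num.Theory.
Set Implicit Arguments. Unset Strict Implicit. Unset Printing Implicit Defensive.
Local Open Scope ring_scope.

(* Let T be the makespan of an arbitrary profile.  Processing times are
   nonincreasing in the start time, so a job started no later than T runs for
   at least its duration at T; hence each machine of the reference profile
   carries jobs whose durations at T sum to at most T, and all durations at T
   sum to at most m T.  Delay-aversion (a_i <= s) makes finishing times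
   monotone in the start time, so on any machine a job completes by
   T + (sum of durations at T of the jobs on that machine), and a deviating
   job additionally needs at most its duration at time 0, which is itself at
   most T.  Averaging the equilibrium inequalities of a job over the m
   machines gives m C_i <= (3m - 1) T. *)

Section Deterioration.
Variables (R : realFieldType) (tau b a : R).

Lemma ptime_ge_tau t : tau <= ptime tau b a t.
Proof. by rewrite /ptime le_max lexx. Qed.

Lemma ptime_ge_lin t : b - a * t <= ptime tau b a t.
Proof. by rewrite /ptime le_max lexx orbT. Qed.

Hypothesis a_ge0 : 0 <= a.

Lemma ptime_nonincr : {homo ptime tau b a : t1 t2 /~ t1 <= t2}.
Proof.
move=> t1 t2 le_t21; rewrite {1}/ptime ge_max ptime_ge_tau /=.
have : a * t2 <= a * t1 by rewrite ler_wpM2l.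
move: (ptime_ge_lin t2); lra.
Qed.

Lemma ptime_le_lipschitz t1 t2 :
  t1 <= t2 -> ptime tau b a t1 <= ptime tau b a t2 + a * (t2 - t1).
Proof.
move=> le_t12; rewrite {1}/ptime ge_max.
have := ptime_ge_tau t2; have := ptime_ge_lin t2.
have : 0 <= a * (t2 - t1) by rewrite mulr_ge0 // subr_ge0.
by move=> *; apply/andP; split; lra.
Qed.

End Deterioration.

Lemma ler_sum_uniq_subset (R : numDomainType) (I : finType) (r : seq I)
    (P : pred I) (F : I -> R) :
  uniq r -> (forall i, i \in r -> P i) -> (forall i, 0 <= F i) ->
  \sum_(i <- r) F i <= \sum_(i | P i) F i.
Proof.
move=> r_uniq rP F_ge0; rewrite big_uniq //= [leRHS]big_mkcond [leLHS]big_mkcond.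
apply: ler_sum => i _; case: ifP => [/rP|_]; last by case: ifP.
by move=> ->.
Qed.

Lemma jobs_on_uniq n m (pi : 'I_m -> {perm 'I_n}) (sg : 'I_n -> 'I_m) k :
  uniq (jobs_on pi sg k).
Proof. by rewrite sort_uniq filter_uniq // enum_uniq. Qed.

Lemma mem_jobs_on n m (pi : 'I_m -> {perm 'I_n}) (sg : 'I_n -> 'I_m) k i :
  (i \in jobs_on pi sg k) = (sg i == k).
Proof. by rewrite mem_sort mem_filter mem_enum andbT. Qed.

Lemma big_jobs_on (R : nmodType) n m (pi : 'I_m -> {perm 'I_n})
    (sg : 'I_n -> 'I_m) k (F : 'I_n -> R) :
  \sum_(i <- jobs_on pi sg k) F i = \sum_(i | sg i == k) F i.
Proof.
rewrite (perm_big _ (permEl (perm_sort _ _))) big_filter big_enum_cond.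
by apply: eq_bigl => i; rewrite inE.
Qed.

Definition jobs_before n m (pi : 'I_m -> {perm 'I_n}) (sg : 'I_n -> 'I_m)
    (i : 'I_n) : seq 'I_n :=
  let l := jobs_on pi sg (sg i) in take (index i l) l.

Lemma jobs_before_uniq n m (pi : 'I_m -> {perm 'I_n}) (sg : 'I_n -> 'I_m) i :
  uniq (jobs_before pi sg i).
Proof. exact/take_uniq/jobs_on_uniq. Qed.

Lemma notin_jobs_before n m (pi : 'I_m -> {perm 'I_n}) (sg : 'I_n -> 'I_m) i :
  i \notin jobs_before pi sg i.
Proof. by rewrite /jobs_before in_take_leq ?index_size ?ltnn. Qed.

Lemma mem_jobs_before n m (pi : 'I_m -> {perm 'I_n}) (sg : 'I_n -> 'I_m) i x :
  x \in jobs_before pi sg i -> sg x = sg i.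
Proof. by move/mem_take; rewrite mem_jobs_on => /eqP. Qed.

Lemma jobs_before_last n m (pi : 'I_m -> {perm 'I_n}) (sg : 'I_n -> 'I_m) k l i :
  jobs_on pi sg k = rcons l i -> jobs_before pi sg i = l.
Proof.
move=> jobs_k; have := jobs_on_uniq pi sg k; have := mem_jobs_on pi sg k i.
rewrite jobs_k mem_rcons mem_head rcons_uniq => /esym/eqP sg_i /andP[i_notin _].
by rewrite /jobs_before sg_i jobs_k -cats1 take_pivot.
Qed.

Section Schedule.
Variables (R : realFieldType) (n m : nat) (s : R) (tau b a : 'I_n -> R).
Variable pi : 'I_m -> {perm 'I_n}.
Hypotheses (s_gt0 : 0 < s) (tau_gt0 : forall i, 0 < tau i).
Hypotheses (a_ge0 : forall i, 0 <= a i) (a_le_s : forall i, a i <= s).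

Local Notation step := (step s tau b a).
Local Notation C := (compl_time s tau b a pi).
Local Notation Cmax := (makespan s tau b a pi).

Definition duration (t : R) (k : 'I_n) : R := ptime (tau k) (b k) (a k) t / s.

Lemma duration_ge0 t k : 0 <= duration t k.
Proof.
by apply: divr_ge0; [apply: le_trans (ptime_ge_tau _ _ _ _); apply: ltW|apply: ltW].
Qed.

Lemma duration_nonincr k : {homo duration^~ k : t1 t2 /~ t1 <= t2}.
Proof. by move=> t1 t2 le_t12; rewrite ler_pM2r ?invr_gt0 // ptime_nonincr. Qed.

Lemma le_step t k : t <= step t k.
Proof. by rewrite /step lerDl duration_ge0. Qed.

(* This is where delay-aversion [a k <= s] is used. *)
Lemma step_mono k : {homo step^~ k : t1 t2 / t1 <= t2}.
Proof.
move=> t1 t2 le_t12; rewrite /step.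
have lip := ptime_le_lipschitz (tau k) (b k) (a_ge0 k) le_t12.
have : a k * (t2 - t1) <= s * t2 - s * t1 by rewrite -mulrBr ler_wpM2r ?subr_ge0.
have over_s t p : t + p / s = (s * t + p) / s by field; rewrite gt_eqF.
by rewrite !over_s ler_pM2r ?invr_gt0 //; lra.
Qed.

Lemma step_le_max t T k : step t k <= Num.max t T + duration T k.
Proof.
have [le_tT|lt_Tt] := leP t T; first exact: step_mono.
by rewrite /step lerD2l duration_nonincr // ltW.
Qed.

Lemma addr_duration_le_step t T k : t <= T -> t + duration T k <= step t k.
Proof. by move=> le_tT; rewrite /step lerD2l duration_nonincr. Qed.

Lemma le_foldl_step t l : t <= foldl step t l.
Proof. by elim: l t => //= k l IH t; apply: le_trans (le_step t k) (IH _). Qed.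

Lemma foldl_step_le t T l :
  foldl step t l <= Num.max t T + \sum_(k <- l) duration T k.
Proof.
elim: l t => [|k l IH] t /=; first by rewrite big_nil addr0 le_max lexx.
apply: le_trans (IH _) _; rewrite big_cons addrA lerD2r ge_max step_le_max /=.
by rewrite -[leLHS]addr0 lerD ?duration_ge0 // le_max lexx orbT.
Qed.

Lemma foldl_step_ge t T l :
  foldl step t l <= T -> t + \sum_(k <- l) duration T k <= foldl step t l.
Proof.
elim: l t => [|k l IH] t /=; first by rewrite big_nil addr0.
move=> fin_le; rewrite big_cons addrA; apply: le_trans (IH _ fin_le); rewrite lerD2r.
apply: addr_duration_le_step.
by apply: le_trans (le_step t k) (le_trans (le_foldl_step _ l) fin_le).
Qed.

Lemma compl_timeE sg i : C sg i = foldl step 0 (rcons (jobs_before pi sg i) i).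
Proof. by rewrite foldl_rcons. Qed.

Lemma compl_time_le_makespan sg i : C sg i <= Cmax sg.
Proof. exact: le_bigmax. Qed.

Lemma makespan_ge0 sg : 0 <= Cmax sg.
Proof. exact: bigmax_ge_id. Qed.

Lemma duration0_le_makespan sg i : duration 0 i <= Cmax sg.
Proof.
apply: le_trans (compl_time_le_makespan sg i); rewrite -[duration 0 i]add0r.
exact/step_mono/le_foldl_step.
Qed.

Lemma machine_finish_le_makespan sg k : foldl step 0 (jobs_on pi sg k) <= Cmax sg.
Proof.
case/lastP: (jobs_on pi sg k) (jobs_before_last (pi := pi) (sg := sg) (k := k))
  => [_|l i before_i]; first exact: makespan_ge0.
by rewrite -(before_i l i) // -compl_timeE compl_time_le_makespan.
Qed.

Lemma sum_duration_on_machine_le sg k :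
  \sum_(i | sg i == k) duration (Cmax sg) i <= Cmax sg.
Proof.
have fin_le := machine_finish_le_makespan sg k.
rewrite -(big_jobs_on pi) -[leLHS]add0r; exact: le_trans (foldl_step_ge fin_le) fin_le.
Qed.

Lemma sum_duration_le_makespan sg :
  \sum_i duration (Cmax sg) i <= m%:R * Cmax sg.
Proof.
rewrite (partition_big sg xpredT) //=.
apply: le_trans (ler_sum _ (fun k _ => sum_duration_on_machine_le sg k)) _.
by rewrite sumr_const card_ord mulr_natl.
Qed.

Lemma compl_time_le sg i T : 0 <= T ->
  C sg i <= T + \sum_(x | sg x == sg i) duration T x.
Proof.
move=> T_ge0; rewrite compl_timeE; apply: le_trans (foldl_step_le _ T _) _.
rewrite (max_r T_ge0) lerD2l; apply: ler_sum_uniq_subset; last exact: duration_ge0.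
  by rewrite rcons_uniq notin_jobs_before jobs_before_uniq.
by move=> x; rewrite mem_rcons inE => /predU1P[->|/mem_jobs_before ->].
Qed.

Lemma compl_time_deviate_le sg i k T : 0 <= T ->
  C (deviate sg i k) i <= T + \sum_(x | sg x == k) duration T x + duration 0 i.
Proof.
move=> T_ge0; have dev_i : deviate sg i k i = k by rewrite /deviate eqxx.
rewrite compl_timeE foldl_rcons; set st := foldl _ _ _.
apply: le_trans (step_le_max st 0 i) _.
rewrite (max_l (le_foldl_step _ _)) lerD2r; apply: le_trans (foldl_step_le _ T _) _.
rewrite (max_r T_ge0) lerD2l.
apply: ler_sum_uniq_subset; [exact: jobs_before_uniq| |exact: duration_ge0].
move=> x x_before; have /negPf x_neq_i : x != i.
  by apply: contraTneq x_before => ->; apply: notin_jobs_before.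
by move: (mem_jobs_before x_before); rewrite dev_i /deviate x_neq_i => ->.
Qed.

End Schedule.

Lemma averaging_bound (R : realFieldType) m (j : 'I_m) (c T : R) (Q : 'I_m -> R) :
  (forall k, c <= T + Q k + (if k == j then 0 else T)) ->
  \sum_k Q k <= m%:R * T -> c <= (3 - m%:R^-1) * T.
Proof.
move=> c_le sumQ_le; have m_gt0 : (0 < m)%N by apply: leq_ltn_trans (ltn_ord j).
have sum_if : \sum_(k < m) (if k == j then 0 else T) = m%:R * T - T.
  rewrite (bigD1 j) //= eqxx add0r (eq_bigr (fun=> T)) => [|k /negPf -> //].
  by rewrite sumr_const cardC1 card_ord -[T *+ _]mulr_natl -subn1 natrB // mulrBl mul1r.
have : \sum_(k < m) c <= \sum_(k < m) (T + Q k + (if k == j then 0 else T)).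
  by apply: ler_sum => k _; apply: c_le.
rewrite !big_split /= sum_if !sumr_const card_ord -(mulr_natl c) -(mulr_natl T) => sum_le.
have m_gt0R : 0 < m%:R :> R by rewrite ltr0n.
rewrite -(ler_pM2l m_gt0R).
have -> : m%:R * ((3 - m%:R^-1) * T) = 3 * (m%:R * T) - T.
  by field; rewrite gt_eqF.
lra.
Qed.

Theorem theorem12 (R : realFieldType) (n m : nat) (s : R)
  (tau b a : 'I_n -> R) (pi : 'I_m -> {perm 'I_n}) (sigma : 'I_n -> 'I_m) :
  (2 <= m)%N -> 0 < s ->
  (forall i, 0 < tau i) -> (forall i, 0 <= b i) ->
  (forall i, 0 <= a i /\ a i <= s) ->
  is_NE s tau b a pi sigma ->
  forall sigma' : 'I_n -> 'I_m,
    makespan s tau b a pi sigma <= (3 - m%:R^-1) * makespan s tau b a pi sigma'.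
Proof.
move=> m_ge2 s_gt0 tau_gt0 _ a_bounds NE sigma'.
have a_ge0 i : 0 <= a i by case: (a_bounds i).
have a_le_s i : a i <= s by case: (a_bounds i).
set T := makespan s tau b a pi sigma'.
have T_ge0 : 0 <= T := makespan_ge0 s tau b a pi sigma'.
have coef_ge0 : 0 <= 3 - m%:R^-1 :> R.
  have : m%:R^-1 <= 1 :> R by rewrite invf_le1 ?ler1n ?ltr0n ?(leq_trans _ m_ge2).
  lra.
apply: bigmax_le => [|i _]; first exact: mulr_ge0.
apply: (@averaging_bound _ _ (sigma i) _ _
  (fun k => \sum_(x | sigma x == k) duration s tau b a T x)).
  move=> k; case: eqP => [->|_].
    by rewrite addr0 (compl_time_le b pi s_gt0 tau_gt0 a_ge0 a_le_s _ _ T_ge0).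
  apply: le_trans (NE i k) _.
  apply: le_trans (compl_time_deviate_le b pi s_gt0 tau_gt0 a_ge0 a_le_s _ _ _ T_ge0) _.
  by rewrite lerD2l (duration0_le_makespan b pi s_gt0 tau_gt0 a_ge0 a_le_s).
apply: le_trans (sum_duration_le_makespan b pi s_gt0 tau_gt0 a_ge0 sigma').
by rewrite (partition_big sigma xpredT).
Qed.
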